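(* Let $T$ be a $k$-IET on $I=[\ell,r)$ over the ordered alphabet $\mathcal{A}=\{a_1<\dots<a_k\}$ with partition $(I_a)_{a\in\mathcal{A}}$ and permutation $\pi\in S_{\mathcal{A}}$. Suppose $|I_{a_k}|=|I_{\pi(a_k)}|$ and $a_k\neq\pi(a_k)$. Let $I'=[\ell,r-|I_{a_k}|)$, $\mathcal{A}'=\mathcal{A}\setminus\{a_k\}$ (with the induced order) and define $\pi'\in S_{\mathcal{A}'}$ by $\pi'(a)=\pi(a_k)$ if $a=\pi^{-1}(a_k)$ and $\pi'(a)=\pi(a)$ otherwise. Then the map induced by $T$ on $I'$ (the first-return map $x\mapsto T^{\nu(x)}(x)$, $\nu(x)=\min\{n>0: T^n(x)\in I'\}$), denoted $\rho(T)$, is the $(k-1)$-IET on $I'$ over $\mathcal{A}'$ with partition $(I_a)_{a\in\mathcal{A}'}$ and permutation $\pi'$. Moreover, for every $x\in I'$, $\Omega_T(x)=\varphi(\Omega_{\rho(T)}(x))$, where $\varphi:\mathcal{A}'^*\to\mathcal{A}^*$ (extended to infinite words) is the morphism with $\varphi(\pi(a_k))=\pi(a_k)a_k$ and $\varphi(c)=c$ for every letter $c\neq\pi(a_k)$.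
   Context: A $k$-IET $T$ on $I=[\ell,r)$ over $\mathcal{A}$ is given by a partition of $I$ into left-closed right-open intervals $(I_a)_{a\in\mathcal{A}}$ of positive length, with $I_a$ to the left of $I_b$ whenever $a<b$, and a permutation $\pi$ of $\mathcal{A}$; $T(x)=x+\tau_a$ for $x\in I_a$ where $\tau_a=\sum_{b:\,\pi^{-1}(b)<\pi^{-1}(a)}|I_b|-\sum_{b<a}|I_b|$ (so the image intervals $T(I_{\pi(a_1)}),\dots,T(I_{\pi(a_k)})$ appear from left to right). The trajectory of $x$ under an IET $S$ over an alphabet $\mathcal{C}$ with partition $(J_c)$ is $\Omega_S(x)=w_0w_1\cdots$ with $w_i=c$ iff $S^i(x)\in J_c$. *)

From HB Require Import structures.
From mathcomp Require Import all_boot all_order all_algebra.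
From mathcomp Require Import reals.
Set Implicit Arguments. Unset Strict Implicit. Unset Printing Implicit Defensive.
Import Order.TTheory GRing.Theory Num.Theory.
Local Open Scope ring_scope.

(* An interval exchange transformation on I = [left, right) over an ordered
   alphabet.  Letters live in an arbitrary eqType L; the alphabet
   A = {a_1 < ... < a_k} is the sequence [iet_alph] (its order is the listing
   order).  [iet_len a] = |I_a|, [iet_perm] = pi (only its values on the
   alphabet matter). *)
Record iet (R : realType) (L : eqType) := IET {
  iet_left : R;
  iet_alph : seq L;
  iet_len  : L -> R;
  iet_perm : L -> L }.

Section IET.
Variables (R : realType) (L : eqType).
Implicit Types (T : iet R L) (a b : L) (x : R).

Definition iet_right T := iet_left T + \sum_(a <- iet_alph T) iet_len T a.

Definition iet_before T b a := (index b (iet_alph T) < index a (iet_alph T))%N.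

Definition iet_start T a :=
  iet_left T + \sum_(b <- iet_alph T | iet_before T b a) iet_len T b.

Definition in_sub T a x :=
  (iet_start T a <= x) && (x < iet_start T a + iet_len T a).

(* pi^{-1}(b): the letter c of the alphabet with pi(c) = b *)
Definition iet_pinv T b :=
  nth b (iet_alph T) (index b (map (iet_perm T) (iet_alph T))).

Definition iet_tau T a :=
  \sum_(b <- iet_alph T | iet_before T (iet_pinv T b) (iet_pinv T a)) iet_len T b
  - \sum_(b <- iet_alph T | iet_before T b a) iet_len T b.

(* T(x) = x + tau_a for x in I_a (the I_a are disjoint, so at most one term
   of the sum is nonzero); T(x) = x outside I (irrelevant). *)
Definition iet_map T x := x + \sum_(a <- iet_alph T | in_sub T a x) iet_tau T a.

Definition is_iet T :=
  [/\ uniq (iet_alph T), iet_alph T != [::],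
      all (fun a => 0 < iet_len T a) (iet_alph T)
    & perm_eq (map (iet_perm T) (iet_alph T)) (iet_alph T)].

(* the letter c with x in I_c ([d] is a default, only used outside I) *)
Definition iet_letter (d : L) T x :=
  nth d (iet_alph T) (find (fun a => in_sub T a x) (iet_alph T)).

Definition traj (d : L) T x : nat -> L :=
  fun i => iet_letter d T (iter i (iet_map T) x).

End IET.

Definition first_return (R : Type) (f : R -> R) (J : pred R) (x y : R) :=
  exists n : nat, [/\ (0 < n)%N, J (iter n f x),
     (forall m : nat, (0 < m < n)%N -> ~~ J (iter m f x)) & y = iter n f x].

(* extension of a (non-erasing) morphism f : L^* -> L^* to infinite words:
   the i-th letter of f(w_0) f(w_1) ...  is the i-th letter of
   f(w_0) ... f(w_i) (which has length > i when f is non-erasing). *)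
Definition morph_inf (L : eqType) (d : L) (f : L -> seq L) (w : nat -> L) : nat -> L :=
  fun i => nth d (flatten [seq f (w j) | j <- iota 0 i.+1]) i.

Definition rho_perm (R : realType) (L : eqType) (T : iet R L) (ak : L) : L -> L :=
  fun a => if a == iet_pinv T ak then iet_perm T ak else iet_perm T a.

Definition rho_morph (L : eqType) (pi : L -> L) (ak : L) : L -> seq L :=
  fun c => if c == pi ak then [:: pi ak; ak] else [:: c].

From HB Require Import structures.
From mathcomp Require Import all_boot all_order all_algebra.
From mathcomp Require Import reals.
From mathcomp Require Import lra zify.
From Stdlib Require Import FunctionalExtensionality.
Import Order.TTheory GRing.Theory Num.Theory.
Local Open Scope ring_scope.
Set Implicit Arguments. Unset Strict Implicit. Unset Printing Implicit Defensive.

(* Since |I_(a_k)| = |I_(pi a_k)|, T carries I_(pi a_k) exactly onto the rightmost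
   interval I_(a_k) = I \ I', and then carries I_(a_k) to exactly where rho(T)
   sends I_(pi a_k), because pi' gives pi(a_k) the image slot that pi gave to
   a_k.  Every other I_c with c in A' is translated by T exactly as by rho(T),
   because the image slots of all other letters are unchanged.  So points of
   I_(pi a_k) return to I' after two steps and all other points after one, and
   the T-trajectory of x is its rho(T)-trajectory with a_k inserted after each
   occurrence of pi(a_k). *)

Lemma filter_index_lt_take (T : eqType) (s : seq T) k :
  uniq s -> (k <= size s)%N -> [seq b <- s | (index b s < k)%N] = take k s.
Proof.
move=> s_uniq k_le.
have : uniq (take k s ++ drop k s) by rewrite cat_take_drop.
rewrite cat_uniq => /and3P [_ /hasPn disj _].
rewrite -[X in filter _ X](cat_take_drop k s) filter_cat.
rewrite (all_filterP _); last by apply/allP => b /index_ltn.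
rewrite -[RHS]cats0 -(filter_pred0 (drop k s)); congr (_ ++ _).
by apply: eq_in_filter => b /disj; rewrite in_take_leq // => /negbTE.
Qed.

Lemma sum_take_index_le (R : numDomainType) (T : eqType) (s : seq T)
    (F : T -> R) b k :
  {in s, forall c, 0 <= F c} -> b \in s -> (index b s < k)%N ->
  \sum_(c <- take (index b s) s) F c + F b <= \sum_(c <- take k s) F c.
Proof.
move=> F_ge0 b_s b_k.
rewrite -{2}(nth_index b b_s) -big_rcons -take_nth ?index_mem //.
rewrite -(subnKC b_k) takeD big_cat /= lerDl big_seq.
by apply: sumr_ge0 => c /mem_take /mem_drop /F_ge0.
Qed.

Lemma sum_take_cover (R : realFieldType) (T : eqType) (s : seq T) (F : T -> R) y :
  uniq s -> 0 <= y < \sum_(b <- s) F b ->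
  exists2 c, c \in s & \sum_(b <- take (index c s) s) F b <= y
                       < \sum_(b <- take (index c s) s) F b + F c.
Proof.
elim: s y => [|c0 t IH] y.
  by rewrite big_nil => _ /andP [y_ge0 y_lt0]; exfalso; lra.
rewrite cons_uniq big_cons => /andP [c0_t t_uniq] /andP [y_ge0 y_lt].
case: (ltrP y (F c0)) => [y_lt0 | y_ge].
  by exists c0; rewrite ?mem_head //= eqxx big_nil add0r y_ge0.
have [|c c_t /andP [c_le c_lt]] := IH (y - F c0) t_uniq.
  by apply/andP; split; lra.
exists c; first by rewrite inE c_t orbT.
have c0_c : (c0 == c) = false by apply: contraNF c0_t => /eqP ->.
by rewrite /= c0_c big_cons; apply/andP; split; lra.
Qed.

(* The left end of T(I_(pi p)): the image intervals are laid out from left to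
   right in the order of the letters p of the alphabet. *)
Definition iet_image_start (R : realType) (L : eqType) (T : iet R L) (p : L) :=
  iet_left T + \sum_(c <- take (index p (iet_alph T)) (iet_alph T))
                 iet_len T (iet_perm T c).

Section IETTheory.
Variables (R : realType) (L : eqType) (T : iet R L).
Hypothesis T_wf : is_iet T.
Local Notation s := (iet_alph T).
Local Notation len := (iet_len T).
Local Notation pi := (iet_perm T).

Let s_uniq : uniq s. Proof. by case: T_wf. Qed.
Let perm_pi : perm_eq (map pi s) s. Proof. by case: T_wf. Qed.

Lemma iet_len_ge0 : {in s, forall a, 0 <= len a}.
Proof. by case: T_wf => _ _ /allP len_gt0 _ a /len_gt0 /ltW. Qed.

Lemma iet_perm_mem a : a \in s -> pi a \in s.
Proof. by move=> a_s; rewrite -(perm_mem perm_pi) map_f. Qed.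

Lemma iet_pinvK a : a \in s -> iet_pinv T (pi a) = a.
Proof.
move=> a_s; have pi_uniq : uniq (map pi s) by rewrite (perm_uniq perm_pi).
have -> : pi a = nth (pi a) (map pi s) (index a s).
  by rewrite (nth_map a) ?index_mem // nth_index.
by rewrite /iet_pinv index_uniq ?size_map ?index_mem // nth_index.
Qed.

Lemma iet_pinv_index b : b \in s -> (index b (map pi s) < size s)%N.
Proof. by move=> b_s; rewrite -(size_map pi) index_mem (perm_mem perm_pi). Qed.

Lemma iet_permK b : b \in s -> pi (iet_pinv T b) = b.
Proof.
move=> b_s; rewrite /iet_pinv -(nth_map b b) ?iet_pinv_index // nth_index //.
by rewrite (perm_mem perm_pi).
Qed.

Lemma iet_pinv_mem b : b \in s -> iet_pinv T b \in s.
Proof. by move=> b_s; rewrite mem_nth ?iet_pinv_index. Qed.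

Lemma big_iet_before (F : L -> R) a : a \in s ->
  \sum_(b <- s | iet_before T b a) F b = \sum_(b <- take (index a s) s) F b.
Proof.
move=> a_s; rewrite /iet_before -big_filter filter_index_lt_take //.
by rewrite ltnW ?index_mem.
Qed.

Lemma iet_startE a : a \in s ->
  iet_start T a = iet_left T + \sum_(b <- take (index a s) s) len b.
Proof. by move=> a_s; rewrite /iet_start big_iet_before. Qed.

Lemma iet_start_lt a b : a \in s -> b \in s -> (index b s < index a s)%N ->
  iet_start T b + len b <= iet_start T a.
Proof.
move=> a_s b_s ba; rewrite !iet_startE // -addrA lerD2l.
exact: sum_take_index_le iet_len_ge0 b_s ba.
Qed.

Lemma in_sub_inj x a b : a \in s -> b \in s ->
  in_sub T a x -> in_sub T b x -> a = b.
Proof.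
move=> a_s b_s /andP [a_le a_lt] /andP [b_le b_lt].
case: (ltngtP (index a s) (index b s)) => [ab|ba|]; last exact: index_inj.
- by exfalso; have := iet_start_lt b_s a_s ab; lra.
- by exfalso; have := iet_start_lt a_s b_s ba; lra.
Qed.

Lemma iet_letterE d a x : a \in s -> in_sub T a x -> iet_letter d T x = a.
Proof.
move=> a_s a_x; have has_x : has (in_sub T ^~ x) s by apply/hasP; exists a.
by apply: in_sub_inj (nth_find d has_x) a_x; rewrite // mem_nth -?has_find.
Qed.

Lemma in_sub_cover x : iet_left T <= x < iet_right T ->
  exists2 a, a \in s & in_sub T a x.
Proof.
rewrite /iet_right => /andP [x_ge x_lt].
have [|a a_s /andP [a_le a_lt]] := @sum_take_cover _ _ s len (x - iet_left T) s_uniq.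
  by apply/andP; split; lra.
by exists a; rewrite // /in_sub iet_startE //; apply/andP; split; lra.
Qed.

Lemma iet_mapE a x : a \in s -> in_sub T a x ->
  iet_map T x = x - iet_start T a + iet_image_start T (iet_pinv T a).
Proof.
move=> a_s a_x; have filter_x : [seq b <- s | in_sub T b x] = [:: a].
  rewrite -(filter_pred1_uniq s_uniq a_s); apply: eq_in_filter => b b_s /=.
  by apply/idP/eqP => [b_x | ->]; first exact: in_sub_inj b_x a_x.
have reindex : \sum_(b <- s | iet_before T (iet_pinv T b) (iet_pinv T a)) len b
             = \sum_(c <- s | iet_before T c (iet_pinv T a)) len (pi c).
  rewrite -[LHS](perm_big _ perm_pi) big_map [LHS]big_seq_cond [RHS]big_seq_cond.
  by apply: eq_bigl => c; case c_s: (c \in s); rewrite //= iet_pinvK.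
rewrite /iet_map -big_filter filter_x big_seq1 /iet_tau reindex.
rewrite !big_iet_before ?iet_pinv_mem // iet_startE // /iet_image_start; lra.
Qed.

Lemma iet_image_start_bounds p : p \in s ->
  iet_left T <= iet_image_start T p /\
  iet_image_start T p + len (pi p) <= iet_right T.
Proof.
have len_pi_ge0 : {in s, forall c, 0 <= len (pi c)}.
  by move=> c /iet_perm_mem /iet_len_ge0.
move=> p_s; split.
  rewrite lerDl big_seq; apply: sumr_ge0 => c /mem_take; exact: len_pi_ge0.
have sum_pi : \sum_(c <- s) len (pi c) = \sum_(b <- s) len b.
  by rewrite -[RHS](perm_big _ perm_pi) big_map.
have := sum_take_index_le len_pi_ge0 p_s (_ : index p s < size s)%N.
rewrite index_mem take_size sum_pi /iet_right /iet_image_start => /(_ p_s) ?; lra.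
Qed.

Lemma iet_map_in x : iet_left T <= x < iet_right T ->
  iet_left T <= iet_map T x < iet_right T.
Proof.
move=> x_in; have [a a_s a_x] := in_sub_cover x_in.
have [lo hi] := iet_image_start_bounds (iet_pinv_mem a_s).
move: (a_x) => /andP [a_le a_lt]; move: x_in => /andP [x_ge x_lt].
rewrite iet_permK // in hi; rewrite (iet_mapE a_s a_x); apply/andP; split; lra.
Qed.

End IETTheory.

Section InducedCoding.
Variables (X : Type) (L : eqType) (d : L) (f g : X -> X) (cf cg : X -> L).
Variables (phi : L -> seq L) (J : pred X).
Hypothesis phi_nonerasing : forall c, (0 < size (phi c))%N.
Hypothesis g_block : forall y, J y ->
  [/\ J (g y), iter (size (phi (cg y))) f y = g y
    & [seq cf (iter m f y) | m <- iota 0 (size (phi (cg y)))] = phi (cg y)].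

Lemma induced_coding_morph_inf x : J x ->
  (fun i => cf (iter i f x)) = morph_inf d phi (fun j => cg (iter j g x)).
Proof.
move=> Jx; pose w j := cg (iter j g x); pose v i := cf (iter i f x).
pose pre j := flatten [seq phi (w i) | i <- iota 0 j].
have preS j : pre j.+1 = pre j ++ phi (w j).
  by rewrite /pre -addn1 iotaD map_cat flatten_cat /= cats0.
have size_pre j : (j <= size (pre j))%N.
  elim: j => // j IH; rewrite preS size_cat; have := phi_nonerasing (w j); lia.
have pre_traj j : [/\ J (iter j g x), iter (size (pre j)) f x = iter j g x
                    & pre j = map v (iota 0 (size (pre j)))].
  elim: j => [|j [Jj iter_j pre_j]]; first by [].
  have [Jg iter_g block_g] := g_block Jj.
  rewrite preS size_cat addnC iterD iter_j iter_g; split => //.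
  rewrite addnC iotaD map_cat -pre_j add0n -[size (pre j)]addn0 iotaDl -map_comp.
  congr (_ ++ _); rewrite -[LHS]block_g; apply: eq_map => m /=.
  by rewrite /v addnC iterD iter_j.
apply: functional_extensionality => i; rewrite /morph_inf -/(w _) -/(pre i.+1).
have [_ _ ->] := pre_traj i.+1.
by rewrite (nth_map 0%N) ?nth_iota ?size_iota //; apply: size_pre.
Qed.

End InducedCoding.

Section Rho.
Variables (R : realType) (L : eqType) (l : R) (s' : seq L) (ak : L).
Variables (lam : L -> R) (pi : L -> L).
Local Notation T := (IET l (rcons s' ak) lam pi).
Local Notation T' := (IET l s' lam (rho_perm T ak)).
Local Notation q0 := (iet_pinv T ak).
Local Notation inI' y := (l <= y < iet_right T - lam ak).
Hypotheses (T_wf : is_iet T) (lam_ak : lam ak = lam (pi ak)).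
Hypothesis ak_moved : ak != pi ak.

Let s'_uniq : uniq s'.
Proof. by case: T_wf; rewrite rcons_uniq => /andP []. Qed.

Let ak_notin : ak \notin s'.
Proof. by case: T_wf; rewrite rcons_uniq => /andP []. Qed.

Let ak_in : ak \in rcons s' ak.
Proof. by rewrite mem_rcons mem_head. Qed.

Let mem_s' b : b \in s' -> b \in rcons s' ak.
Proof. by rewrite mem_rcons inE => ->; rewrite orbT. Qed.

Let mem_s'_neq b : b \in rcons s' ak -> b != ak -> b \in s'.
Proof. by rewrite mem_rcons inE => /orP [/eqP -> | //]; rewrite eqxx. Qed.

Let pi_inj : {in rcons s' ak &, injective pi}.
Proof. exact: can_in_inj (iet_pinvK T_wf). Qed.

Let pi_q0 : pi q0 = ak.
Proof. exact: (iet_permK T_wf ak_in). Qed.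

Let pi_ak_in : pi ak \in s'.
Proof. by rewrite mem_s'_neq ?(iet_perm_mem T_wf) // eq_sym. Qed.

Let q0_in : q0 \in s'.
Proof.
rewrite mem_s'_neq ?(iet_pinv_mem T_wf) //.
by apply: contra_neq ak_moved => q0_ak; rewrite -{1}pi_q0 q0_ak.
Qed.

Let pinv_in c : c \in s' -> c != pi ak -> iet_pinv T c \in s'.
Proof.
move=> c_s c_pi; rewrite mem_s'_neq ?(iet_pinv_mem T_wf) ?mem_s' //.
by apply: contra_neq c_pi => pinv_ak; rewrite -(iet_permK T_wf (mem_s' c_s)) pinv_ak.
Qed.

Let take_index_rcons b : b \in s' ->
  take (index b (rcons s' ak)) (rcons s' ak) = take (index b s') s'.
Proof. by move=> b_s; rewrite -cats1 index_cat b_s takel_cat ?index_size. Qed.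

Let take_index_ak : take (index ak (rcons s' ak)) (rcons s' ak) = s'.
Proof.
by rewrite -cats1 index_cat (negbTE ak_notin) /= eqxx addn0 takel_cat ?take_size.
Qed.

Lemma rho_perm_len c : lam (rho_perm T ak c) = lam (pi c).
Proof. by rewrite /rho_perm; case: eqP => // ->; rewrite pi_q0 lam_ak. Qed.

Lemma rho_perm_mem a : a \in s' -> rho_perm T ak a \in s'.
Proof.
move=> a_s; rewrite /rho_perm; case: eqP => // a_q0.
rewrite mem_s'_neq ?(iet_perm_mem T_wf) ?mem_s' //.
by apply/eqP => pi_a; apply: a_q0; rewrite -(iet_pinvK T_wf (mem_s' a_s)) pi_a.
Qed.

Lemma rho_perm_inj : {in s' &, injective (rho_perm T ak)}.
Proof.
have pi_ak_out b : b \in s' -> pi ak = pi b -> False.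
  move=> b_s /(pi_inj ak_in (mem_s' b_s)) ak_b.
  by move: ak_notin; rewrite ak_b b_s.
move=> a b a_s b_s; rewrite /rho_perm.
case: eqP => [-> | _]; case: eqP => [-> | _] //.
- by move/(pi_ak_out b b_s).
- by move/esym/(pi_ak_out a a_s).
- exact: pi_inj (mem_s' a_s) (mem_s' b_s).
Qed.

Lemma rho_is_iet : is_iet T'.
Proof.
have pi'_uniq : uniq (map (rho_perm T ak) s').
  by rewrite map_inj_in_uniq // => a b; apply: rho_perm_inj.
have pi'_sub : {subset map (rho_perm T ak) s' <= s'}.
  by move=> b /mapP [a a_s ->]; apply: rho_perm_mem.
split => //=.
- by apply: contraTneq pi_ak_in => ->.
- by case: T_wf => _ _ /allP lam_gt0 _; apply/allP => b /mem_s' /lam_gt0.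
have [_ pi'_eq] := uniq_min_size pi'_uniq pi'_sub (eq_leq (esym (size_map _ _))).
exact: uniq_perm.
Qed.

Lemma rho_right : iet_right T' = iet_right T - lam ak.
Proof. by rewrite /iet_right /= big_rcons /= addrA addrK. Qed.

Lemma rho_start a : a \in s' -> iet_start T' a = iet_start T a.
Proof.
move=> a_s; rewrite (iet_startE rho_is_iet a_s) (iet_startE T_wf (mem_s' a_s)).
by rewrite /= take_index_rcons.
Qed.

Lemma rho_in_sub a x : a \in s' -> in_sub T' a x = in_sub T a x.
Proof. by move=> a_s; rewrite /in_sub rho_start. Qed.

Lemma rho_image_start q : q \in s' -> iet_image_start T' q = iet_image_start T q.
Proof.
move=> q_s; rewrite /iet_image_start /= take_index_rcons //; congr (_ + _).
by apply: eq_bigr => c _; apply: rho_perm_len.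
Qed.

Lemma start_ak : iet_start T ak = iet_right T - lam ak.
Proof. by rewrite (iet_startE T_wf ak_in) /= take_index_ak -rho_right. Qed.

Lemma image_start_ak : iet_image_start T ak = iet_right T - lam ak.
Proof.
have sum_pi : \sum_(c <- rcons s' ak) lam (pi c) = \sum_(c <- rcons s' ak) lam c.
  by case: T_wf => _ _ _ perm_pi; rewrite -[RHS](perm_big _ perm_pi) big_map.
move: sum_pi; rewrite /iet_image_start /= take_index_ak -rho_right /iet_right /=.
by rewrite !big_rcons /= -lam_ak => /addIr ->.
Qed.

Lemma rho_pinv_pi_ak : iet_pinv T' (pi ak) = q0.
Proof.
have pi'_q0 : rho_perm T ak q0 = pi ak by rewrite /rho_perm eqxx.
by rewrite -pi'_q0 (iet_pinvK rho_is_iet q0_in).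
Qed.

Lemma rho_pinv c : c \in s' -> c != pi ak -> iet_pinv T' c = iet_pinv T c.
Proof.
move=> c_s c_pi; have pi_c : pi (iet_pinv T c) = c := iet_permK T_wf (mem_s' c_s).
have pi'_c : rho_perm T ak (iet_pinv T c) = c.
  rewrite /rho_perm ifN ?pi_c //; apply: contraTneq c_s => pinv_q0.
  by rewrite -pi_c pinv_q0 pi_q0.
by rewrite -{1}pi'_c (iet_pinvK rho_is_iet (pinv_in c_s c_pi)).
Qed.

Lemma rho_cover y : inI' y -> exists2 c, c \in s' & in_sub T' c y.
Proof. by move=> y_in; apply: (in_sub_cover rho_is_iet); rewrite rho_right. Qed.

Lemma rho_map_in y : inI' y -> inI' (iet_map T' y).
Proof.
by move=> y_in; rewrite -rho_right; apply: (iet_map_in rho_is_iet); rewrite rho_right.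
Qed.

Lemma in_sub_ak_notin_I' z : in_sub T ak z -> ~~ inI' z.
Proof.
by rewrite /in_sub start_ak => /andP [z_ge _]; rewrite negb_and -leNgt z_ge orbT.
Qed.

Lemma rho_map_neq c y : c \in s' -> c != pi ak -> in_sub T' c y ->
  iet_map T y = iet_map T' y.
Proof.
move=> c_s c_pi y_c; have y_c' : in_sub T c y by rewrite -rho_in_sub.
rewrite (iet_mapE rho_is_iet c_s y_c) (iet_mapE T_wf (mem_s' c_s) y_c').
by rewrite rho_start // rho_pinv // rho_image_start ?pinv_in.
Qed.

Lemma rho_map_pi_ak y : in_sub T' (pi ak) y ->
  in_sub T ak (iet_map T y) /\ iet_map T (iet_map T y) = iet_map T' y.
Proof.
move=> y_c; have y_c' : in_sub T (pi ak) y by rewrite -rho_in_sub.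
have Ty : iet_map T y = y - iet_start T (pi ak) + iet_start T ak.
  rewrite (iet_mapE T_wf (mem_s' pi_ak_in) y_c') (iet_pinvK T_wf ak_in).
  by rewrite image_start_ak start_ak.
have Ty_ak : in_sub T ak (iet_map T y).
  have len_ak : iet_len T ak = iet_len T (pi ak) := lam_ak.
  by move: y_c' => /andP [y_ge y_lt]; rewrite /in_sub Ty; apply/andP; split; lra.
split=> //; rewrite (iet_mapE T_wf ak_in Ty_ak) (iet_mapE rho_is_iet pi_ak_in y_c).
rewrite rho_pinv_pi_ak rho_image_start // rho_start // Ty; lra.
Qed.

Lemma rho_first_return x : inI' x ->
  first_return (iet_map T) (fun y => inI' y) x (iet_map T' x).
Proof.
move=> x_in; have T'x_in := rho_map_in x_in.
have [c c_s x_c] := rho_cover x_in; have [c_pi | c_pi] := eqVneq c (pi ak).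
- rewrite c_pi in x_c; have [Tx_ak TTx] := rho_map_pi_ak x_c.
  have iter2 : iter 2 (iet_map T) x = iet_map T' x := TTx.
  exists 2%N; split; rewrite ?iter2 //.
  by case=> [|[|m]] // _; apply: in_sub_ak_notin_I'.
- have iter1 : iter 1 (iet_map T) x = iet_map T' x := rho_map_neq c_s c_pi x_c.
  by exists 1%N; split; rewrite ?iter1 // => -[|m].
Qed.

Lemma rho_coding_block y : inI' y ->
  [/\ inI' (iet_map T' y),
      iter (size (rho_morph pi ak (iet_letter ak T' y))) (iet_map T) y = iet_map T' y
    & [seq iet_letter ak T (iter m (iet_map T) y)
         | m <- iota 0 (size (rho_morph pi ak (iet_letter ak T' y)))]
      = rho_morph pi ak (iet_letter ak T' y)].
Proof.
move=> y_in; have T'y_in := rho_map_in y_in.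
have [c c_s y_c] := rho_cover y_in; have y_c' : in_sub T c y by rewrite -rho_in_sub.
rewrite (iet_letterE rho_is_iet ak c_s y_c) /rho_morph.
have [c_pi | c_pi] := eqVneq c (pi ak).
- rewrite c_pi in y_c y_c'; have [Ty_ak TTy] := rho_map_pi_ak y_c.
  have iter2 : iter 2 (iet_map T) y = iet_map T' y := TTy.
  rewrite [size _]/= iter2; split=> //.
  change ([:: iet_letter ak T y; iet_letter ak T (iet_map T y)] = [:: pi ak; ak]).
  rewrite (iet_letterE T_wf ak (mem_s' pi_ak_in) y_c').
  by rewrite (iet_letterE T_wf ak ak_in Ty_ak).
- have iter1 : iter 1 (iet_map T) y = iet_map T' y := rho_map_neq c_s c_pi y_c.
  rewrite [size _]/= iter1; split=> //.
  change ([:: iet_letter ak T y] = [:: c]).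
  by rewrite (iet_letterE T_wf ak (mem_s' c_s) y_c').
Qed.

End Rho.

Theorem proposition4p1 (R : realType) (L : eqType)
    (l : R) (s' : seq L) (ak : L) (lam : L -> R) (pi : L -> L) :
  is_iet (IET l (rcons s' ak) lam pi) ->
  lam ak = lam (pi ak) ->
  ak != pi ak ->
  let T := IET l (rcons s' ak) lam pi in
  let T' := IET l s' lam (rho_perm T ak) in
  let inI' := fun x : R => (l <= x) && (x < iet_right T - lam ak) in
  [/\ is_iet T',
      iet_right T' = iet_right T - lam ak,
      (forall a : L, a \in s' -> forall x : R, in_sub T' a x = in_sub T a x),
      (forall x : R, inI' x -> first_return (iet_map T) inI' x (iet_map T' x))
    & (forall x : R, inI' x ->
         traj ak T x = morph_inf ak (rho_morph pi ak) (traj ak T' x))].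
Proof.
move=> T_wf lam_ak ak_moved T T' inI'; split.
- exact: rho_is_iet.
- exact: rho_right.
- by move=> a a_s x; apply: rho_in_sub.
- by move=> x; apply: rho_first_return.
- move=> x x_in; apply: induced_coding_morph_inf x_in => [c | y y_in].
    by rewrite /rho_morph; case: ifP.
  exact: rho_coding_block.
Qed.
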